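(* Let $n\geq 5$, let $B_n$ be the braid group on $n$ strands, and let $G$ be a finite group. If $f\colon B_n\rightarrow G$ is a homomorphism that is not cyclic, then \[ |G| \geq 2^{\lfloor n/2\rfloor-1}\left(\lfloor n/2\rfloor\right)!. \]
   Context: The abelianization of $B_n$ is infinite cyclic, $B_n/B_n'\cong\mathbb{Z}$, where $B_n'$ is the commutator subgroup. A homomorphism $B_n\rightarrow G$ is called cyclic if it factors through the abelianization map $B_n\rightarrow \mathbb{Z}$ (equivalently, if its kernel contains $B_n'$). *)

From mathcomp Require Import all_boot all_fingroup.
Set Implicit Arguments. Unset Strict Implicit. Unset Printing Implicit Defensive.
Local Open Scope group_scope.

(* The braid group B_n has the Artin presentation with generators
   sigma_1, ..., sigma_{n-1} (indexed here by 0, ..., n-2) and relations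
     sigma_i sigma_{i+1} sigma_i = sigma_{i+1} sigma_i sigma_{i+1},
     sigma_i sigma_j = sigma_j sigma_i   for |i - j| >= 2.
   By the universal property of this presentation, a homomorphism
   f : B_n -> G is exactly the data s i := f(sigma_i) (i < n-1) of elements
   of G satisfying these relations. *)
Definition braid_hom (gT : finGroupType) (n : nat) (G : {set gT})
    (s : nat -> gT) : Prop :=
  [/\ (forall i, i.+1 < n -> s i \in G),
      (forall i, i.+2 < n -> s i * s i.+1 * s i = s i.+1 * s i * s i.+1)
    & (forall i j, i.+1 < j -> j.+1 < n -> commute (s i) (s j))].

(* The abelianization map B_n -> Z sends every sigma_i to 1.  A homomorphism
   f factors through it, f = h o ab with h : Z -> G a homomorphism, iff
   h(1) = x is a common value of all f(sigma_i). *)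
Definition braid_hom_cyclic (gT : finGroupType) (n : nat) (s : nat -> gT)
    : Prop :=
  exists x : gT, forall i, i.+1 < n -> s i = x.

(* Let m = n/2 (rounded down) and x_i = f(sigma_(2i+1)) for i < m.  The x_i
   pairwise commute, and conjugation by sigma_(2i+2) sigma_(2i+3) sigma_(2i+1)
   sigma_(2i+2) swaps x_i and x_(i+1) while fixing the other x_j; hence every
   permutation of the x_i is induced by conjugation by an element of G.  As f
   is not cyclic and n >= 5, x_0 <> x_1, so by 2-transitivity the x_i are
   pairwise distinct.  Elements of G inducing distinct permutations lie in
   distinct cosets of the centraliser C of the x_i, whence |G| >= m! |C|.
   Finally C contains the group generated by x_0, ..., x_(m-2), in which each
   x_j lies outside the subgroup generated by its predecessors (an element
   inducing the transposition of j and m-1 centralises them but moves x_j),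
   so |C| >= 2^(m-1). *)

From mathcomp Require Import all_boot all_fingroup.
From mathcomp Require Import zify.
Set Implicit Arguments. Unset Strict Implicit. Unset Printing Implicit Defensive.
Local Open Scope group_scope.

Lemma braid_commute_eq (gT : finGroupType) (a c : gT) :
  commute a c -> a * c * a = c * a * c -> a = c.
Proof.
move=> ac; have -> : a * c * a = a * a * c by rewrite -mulgA -ac mulgA.
by rewrite -ac => /mulIg/mulgI.
Qed.

Lemma braid_conjg (gT : finGroupType) (a b : gT) :
  a * b * a = b * a * b -> a ^ (b * a) = b.
Proof. by move=> aba; rewrite conjgE [a * _]mulgA aba mulKg. Qed.

Lemma braid_conj_swap (gT : finGroupType) (a b c : gT) :
    a * b * a = b * a * b -> b * c * b = c * b * c -> commute a c ->
  let g := b * c * a * b in a ^ g = c /\ c ^ g = a.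
Proof.
move=> aba bcb ac g; split.
  have -> : g = b * a * (c * b) by rewrite /g -[b * c * a]mulgA -ac !mulgA.
  by rewrite conjgM !braid_conjg.
by rewrite /g -mulgA conjgM !braid_conjg.
Qed.

Lemma adjacent_tperms_gen k (R : {group {perm 'I_k.+1}}) :
  (forall a b : 'I_k.+1, b = a.+1 :> nat -> tperm a b \in R) -> R :=: setT.
Proof.
move=> adjR; apply/eqP; rewrite eqEsubset subsetT -(gen_tperm ord0) gen_subG.
apply/subsetP=> _ /imsetP[b _ ->]; elim: b => m; elim: m => [|m IHm] ltm.
  by rewrite (_ : Ordinal ltm = ord0) ?tperm1 ?group1 //; apply: val_inj.
pose a : 'I_k.+1 := Ordinal (ltnW ltm).
rewrite -(@tpermJ_tperm _ a ord0 (Ordinal ltm)) -?val_eqE /= ?neq_ltn ?ltnSn //.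
by apply: groupJ; [exact: adjR | rewrite tpermC IHm].
Qed.

Section ConjugationPermutations.

Variables (gT : finGroupType) (I : finType) (G : {group gT}) (x : I -> gT).

Definition conj_perms : {set {perm I}} :=
  [set p : {perm I} | [exists g in G, [forall j, x j ^ g == x (p j)]]].

Lemma conj_permsP (p : {perm I}) :
  reflect (exists2 g, g \in G & forall j, x j ^ g = x (p j)) (p \in conj_perms).
Proof.
rewrite inE; apply: (iffP exists_inP) => -[g Gg xg]; exists g => //.
  by move=> j; apply/eqP/(forallP xg).
by apply/forallP=> j; rewrite xg.
Qed.

Lemma conj_perms_group_set : group_set conj_perms.
Proof.
apply/group_setP; split.
  by apply/conj_permsP; exists 1 => // j; rewrite conjg1 perm1.
move=> p q /conj_permsP[g Gg xg] /conj_permsP[h Gh xh].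
apply/conj_permsP; exists (g * h) => [|j]; first exact: groupM.
by rewrite conjgM xg xh permM.
Qed.

Canonical conj_perms_group := Group conj_perms_group_set.

End ConjugationPermutations.

Section PrefixGenerated.

Variables (gT : finGroupType) (k : nat) (x : 'I_k -> gT).

Definition prefix_gen (m : nat) : {group gT} :=
  <<[set x i | i : 'I_k & i < m]>>%G.

Lemma mem_prefix_gen (i : 'I_k) m : i < m -> x i \in prefix_gen m.
Proof. by move=> lt_im; rewrite mem_gen // imset_f // inE. Qed.

Lemma card_prefix_gen m :
    m <= k -> (forall i : 'I_k, i < m -> x i \notin prefix_gen i) ->
  2 ^ m <= #|prefix_gen m|.
Proof.
elim: m => [|m IHm] lt_mk notin_prefix; first by rewrite cardG_gt0.
have sub_m : prefix_gen m \subset prefix_gen m.+1.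
  rewrite gen_subG; apply/subsetP=> _ /imsetP[i lt_im ->].
  by rewrite inE in lt_im; apply/mem_prefix_gen/ltnW.
have index_gt1 : 1 < #|prefix_gen m.+1 : prefix_gen m|.
  rewrite indexg_gt1; apply: contraNN (notin_prefix (Ordinal lt_mk) (ltnSn m)).
  by move/subsetP; apply; apply: mem_prefix_gen.
have card_m : 2 ^ m <= #|prefix_gen m|.
  by apply: IHm (ltnW lt_mk) _ => i lt_im; apply: notin_prefix (ltnW lt_im).
by rewrite -(Lagrange sub_m) expnS mulnC leq_mul.
Qed.

End PrefixGenerated.

Section SymmetricConjugation.

Variables (gT : finGroupType) (G : {group gT}) (k : nat) (x : 'I_k.+1 -> gT).
Hypothesis conj_permsT : conj_perms G x = [set: {perm 'I_k.+1}].

Let realizer (p : {perm 'I_k.+1}) :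
  exists2 g, g \in G & forall j, x j ^ g = x (p j).
Proof. by apply/conj_permsP; rewrite conj_permsT inE. Qed.

Lemma conj_permsT_inj i0 i1 : x i0 != x i1 -> injective x.
Proof.
move=> x01; have neq01 : i0 != i1 by apply: contraNneq x01 => ->.
move=> u v xuv; apply/eqP; apply: contraT => neq_uv; case/eqP: x01.
pose p := tperm u i0 * tperm (tperm u i0 v) i1.
have [pu pv] : p u = i0 /\ p v = i1.
  rewrite !permM !tpermL; split=> //; apply: tpermD; last by rewrite eq_sym.
  by rewrite -[X in _ != X](tpermL u i0) (inj_eq perm_inj) eq_sym.
by have [g _ xg] := realizer p; rewrite -pu -pv -!xg xuv.
Qed.

Hypothesis x_inj : injective x.

Lemma conj_permsT_notin_prefix (i : 'I_k.+1) :
  i < k -> x i \notin prefix_gen x i.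
Proof.
move=> lt_ik; have [g _ xg] := realizer (tperm i ord_max).
have neq_i_max : i != ord_max by rewrite -val_eqE /= neq_ltn lt_ik.
have prefix_cent : prefix_gen x i \subset 'C[g].
  rewrite gen_subG; apply/subsetP=> _ /imsetP[l lt_li ->]; rewrite inE in lt_li.
  apply/cent1P/commgP/conjg_fixP; rewrite xg tpermD // -val_eqE /= neq_ltn.
    by rewrite lt_li orbT.
  by rewrite (ltn_trans lt_li lt_ik) orbT.
apply: contra neq_i_max => /(subsetP prefix_cent)/cent1P/commgP/conjg_fixP.
by rewrite xg tpermL => /x_inj ->.
Qed.

Lemma card_cent_conj_permsT :
  #|'C_G([set x j | j : 'I_k.+1])| * k.+1`! <= #|G|.
Proof.
set C := 'C_G(_); have [g Gg xg] := fin_all_exists2 realizer.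
pose f (cp : gT * {perm 'I_k.+1}) := cp.1 * g cp.2.
have xCg c p j : c \in C -> x j ^ (c * g p) = x (p j).
  case/setIP=> _ /centP cent_c.
  rewrite conjgM -xg; congr (_ ^ _).
  by apply/conjg_fixP/commgP/commute_sym/cent_c/imset_f.
have f_inj : {in setX C setT &, injective f}.
  move=> [c p] [d q] /setXP[Cc _] /setXP[Cd _]; rewrite /f /= => e.
  have pq : p = q by apply/permP => j; apply: x_inj; rewrite -(xCg c) // e xCg.
  by move: e; rewrite pq => /mulIg ->.
rewrite -card_Sn -cardsT -cardsX -(card_in_imset f_inj) subset_leq_card //.
apply/subsetP=> _ /imsetP[[c p] /setXP[/setIP[Gc _] _] ->].
by rewrite groupM.
Qed.

Hypotheses (xG : forall i, x i \in G)
  (x_commute : forall i j, commute (x i) (x j)).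

Lemma conj_permsT_card : 2 ^ k * k.+1`! <= #|G|.
Proof.
apply: leq_trans card_cent_conj_permsT; rewrite leq_mul2r; apply/orP; right.
apply: leq_trans (card_prefix_gen (leqnSn k) conj_permsT_notin_prefix) _.
apply: subset_leq_card; rewrite gen_subG; apply/subsetP=> _ /imsetP[i _ ->].
rewrite inE xG; apply/centP=> _ /imsetP[j _ ->]; exact: x_commute.
Qed.

End SymmetricConjugation.

Section BraidHomomorphism.

Variables (gT : finGroupType) (G : {group gT}) (n : nat) (s : nat -> gT).
Hypothesis s_hom : braid_hom n G s.

(* For n = 4 this fails: sigma_1, sigma_3 |-> (1 2), sigma_2 |-> (2 3) defines a
   non-cyclic B_4 -> S_3. *)
Lemma braid_hom_cyclic_of_eq02 : 4 < n -> s 0 = s 2 -> braid_hom_cyclic n s.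
Proof.
case: s_hom => _ s_braid s_comm n_gt4 s02.
have s23 : s 2 = s 3.
  by apply: braid_commute_eq; [rewrite -s02; apply: s_comm | apply: s_braid].
have s01 : s 0 = s 1.
  apply: braid_commute_eq; last by apply: s_braid; lia.
  by rewrite s02 s23; apply/commute_sym/s_comm.
have s_succ i : i.+2 < n -> s i = s i.+1.
  elim: i => [|i IHi] lt_in; first exact: s01.
  apply: braid_commute_eq; last exact: s_braid.
  by rewrite -IHi ?(ltnW lt_in) //; apply: s_comm.
exists (s 0); elim=> [|i IHi] lt_in //.
by rewrite -(s_succ i lt_in) IHi // ltnW.
Qed.

Variable k : nat.
Hypothesis lt_2k_n : 2 * k + 1 < n.

Definition even_gen (i : 'I_k.+1) := s (2 * i).

Lemma even_gen_in i : even_gen i \in G.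
Proof. by case: s_hom => s_in _ _; apply: s_in; have := ltn_ord i; lia. Qed.

Lemma even_gens_commute i j : commute (even_gen i) (even_gen j).
Proof.
case: s_hom => _ _ s_comm; have := ltn_ord i; have := ltn_ord j.
have [lt_ij|lt_ji|/val_inj ->] := ltngtP i j => lt_jk lt_ik.
- by apply: s_comm; lia.
- by apply/commute_sym/s_comm; lia.
- exact: commute_refl.
Qed.

Lemma even_gen_swap (a b : 'I_k.+1) :
  b = a.+1 :> nat -> tperm a b \in conj_perms G even_gen.
Proof.
move=> b_def; have lt_bk := ltn_ord b; case: s_hom => s_in s_braid s_comm.
set i := (2 * a)%N.
have [conj_a conj_b] := braid_conj_swap (s_braid i ltac:(lia))
  (s_braid i.+1 ltac:(lia)) (s_comm i i.+2 ltac:(lia) ltac:(lia)).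
have gen_a : even_gen a = s i by [].
have gen_b : even_gen b = s i.+2 by rewrite /even_gen b_def; congr s; lia.
apply/conj_permsP; exists (s i.+1 * s i.+2 * s i * s i.+1) => [|j].
  by rewrite !groupM ?s_in //; lia.
have [-> | neq_ja] := eqVneq j a; first by rewrite tpermL gen_a gen_b conj_a.
have [-> | neq_jb] := eqVneq j b; first by rewrite tpermR gen_a gen_b conj_b.
rewrite tpermD 1?eq_sym //; apply/conjg_fixP/commgP.
have far_j m : i <= m <= i.+2 -> commute (even_gen j) (s m).
  have lt_jk := ltn_ord j.
  move: neq_ja neq_jb; rewrite -!val_eqE /= => neq_ja neq_jb.
  have [lt_ja|lt_bj] : j < a \/ b < j by lia.
    by move=> le_m; apply: s_comm; lia.
  by move=> le_m; apply/commute_sym/s_comm; lia.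
by repeat apply: commuteM; apply: far_j; lia.
Qed.

Lemma conj_perms_even_genT : conj_perms G even_gen = [set: {perm 'I_k.+1}].
Proof.
exact: (adjacent_tperms_gen (R := conj_perms_group G even_gen) even_gen_swap).
Qed.

End BraidHomomorphism.

Theorem theorem1p1 (gT : finGroupType) (G : {group gT}) (n : nat)
    (s : nat -> gT) :
  5 <= n -> braid_hom n G s -> ~ braid_hom_cyclic n s ->
  2 ^ (n./2 - 1) * (n./2)`! <= #|G|.
Proof.
move=> n_ge5 s_hom s_noncyclic.
have [k n_half] : exists k, n./2 = k.+1 by exists n./2.-1; lia.
have lt_2k_n : 2 * k + 1 < n by lia.
have k_gt0 : 0 < k by lia.
rewrite n_half subn1 /=.
have permsT := conj_perms_even_genT s_hom lt_2k_n.
apply: (conj_permsT_card permsT)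
  (even_gen_in s_hom lt_2k_n) (even_gens_commute s_hom lt_2k_n).
apply: (conj_permsT_inj permsT (i0 := ord0) (i1 := inord 1)).
apply/eqP=> s02; apply/s_noncyclic/(braid_hom_cyclic_of_eq02 s_hom).
  by lia.
by move: s02; rewrite /even_gen /= inordK.
Qed.
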